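(* Let $\boldsymbol{A}$ be the adjacency matrix of an undirected graph without self-loops on a finite vertex set $\boldsymbol{V}=\{1,\dots,N\}$. Let $\mathcal{R}_e\subset\boldsymbol{V}$ be a nonempty set of egos, $n_e=|\mathcal{R}_e|$, and $\mathcal{R}_a\subset\boldsymbol{V}\setminus\mathcal{R}_e$ a set of alters, each alter $j$ having a unique recruiting ego $e(j)\in\mathcal{R}_e$ with $A_{j\,e(j)}=1$. Let $\boldsymbol{Z}\in\{0,1\}^N$ have independent components with $\Pr(Z_i=1)=p_z\,\mathbb{I}\{i\in\mathcal{R}_e\}$ for a known $p_z\in(0,1)$, and let $F_i=\mathbb{I}\{\sum_{j\neq i}Z_jA_{ij}>0\}$. Each unit $i\in\mathcal{R}_e\cup\mathcal{R}_a$ has fixed real potential outcomes $Y_i(z,f)$, $z,f\in\{0,1\}$, and observed outcome $Y_i=\sum_{z,f\in\{0,1\}}Y_i(z,f)\mathbb{I}\{Z_i=z,F_i=f\}$. Assume there is a constant $\kappa$ such that $Y_i(1,1)-Y_i(0,1)=\kappa[Y_i(1,0)-Y_i(0,0)]$ for all $i\in\mathcal{R}_e$. For $i\in\mathcal{R}_e$ let $\pi_i^e=\Pr(F_i=1)$ (over $\boldsymbol{Z}$), and assume $1+\pi_i^e(\kappa-1)\neq0$ for all $i\in\mathcal{R}_e$. Define $$DE=\frac1{n_e}\sum_{i\in\mathcal{R}_e}[Y_i(1,0)-Y_i(0,0)],\qquad \widehat{DE}_{adj}=\frac1{n_e}\sum_{i\in\mathcal{R}_e}\frac{1}{1+\pi_i^e(\kappa-1)}\Big[\frac{\mathbb{I}\{Z_i=1\}Y_i}{p_z}-\frac{\mathbb{I}\{Z_i=0\}Y_i}{1-p_z}\Big].$$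 Then $\mathbb{E}_{\boldsymbol{Z}}[\widehat{DE}_{adj}]=DE$.
   Context: Design-based setting: the network, the sample, the recruitment map and the potential outcomes are fixed; the only randomness is the treatment assignment $\boldsymbol{Z}$, and expectations are over $\boldsymbol{Z}$. The observed network links each alter only to its recruiting ego, while the true network $\boldsymbol{A}$ may contain ego–ego edges. *)

(* Design-based setting: only Z is random. *)
From mathcomp Require Import all_boot all_order all_algebra.
Set Implicit Arguments. Unset Strict Implicit. Unset Printing Implicit Defensive.
Import Order.TTheory GRing.Theory Num.Theory.
Local Open Scope ring_scope.

Section Defs.
Variables (R : realFieldType) (N : nat).

Definition assignment := {ffun 'I_N -> bool}.

Definition pZ1 (Re : {set 'I_N}) (pz : R) (i : 'I_N) : R :=
  if i \in Re then pz else 0.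

Definition probZ (Re : {set 'I_N}) (pz : R) (z : assignment) : R :=
  \prod_(i : 'I_N) (if z i then pZ1 Re pz i else 1 - pZ1 Re pz i).

Definition EZ (Re : {set 'I_N}) (pz : R) (g : assignment -> R) : R :=
  \sum_(z : assignment) probZ Re pz z * g z.

Definition exposure (A : 'I_N -> 'I_N -> bool) (z : assignment) (i : 'I_N) : bool :=
  (0 < \sum_(j : 'I_N | j != i) (z j * A i j))%N.

Definition obsY (A : 'I_N -> 'I_N -> bool) (Y : 'I_N -> bool -> bool -> R)
  (z : assignment) (i : 'I_N) : R :=
  \sum_(a : bool) \sum_(f : bool)
     Y i a f * ((z i == a) && (exposure A z i == f))%:R.

Definition pi_e (Re : {set 'I_N}) (pz : R) (A : 'I_N -> 'I_N -> bool) (i : 'I_N) : R :=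
  EZ Re pz (fun z => (exposure A z i)%:R).

Definition DE (Re : {set 'I_N}) (Y : 'I_N -> bool -> bool -> R) : R :=
  (#|Re|%:R)^-1 * \sum_(i in Re) (Y i true false - Y i false false).

Definition DE_adj (Re : {set 'I_N}) (pz kappa : R) (A : 'I_N -> 'I_N -> bool)
  (Y : 'I_N -> bool -> bool -> R) (z : assignment) : R :=
  (#|Re|%:R)^-1 * \sum_(i in Re)
     (1 + pi_e Re pz A i * (kappa - 1))^-1 *
     ((z i)%:R * obsY A Y z i / pz - (~~ z i)%:R * obsY A Y z i / (1 - pz)).

End Defs.

(* For an ego i the exposure F_i only depends on the treatments of the other
   units, so under independent assignment Z_i is independent of F_i.  Hence the
   inverse-probability contrast of unit i has expectation
   E[Y_i(1,F_i) - Y_i(0,F_i)] = (1 - pi_i) tau_i + pi_i kappa tau_i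
   = (1 + pi_i (kappa - 1)) tau_i  with  tau_i = Y_i(1,0) - Y_i(0,0),
   and the adjustment weight cancels the factor. *)
From mathcomp Require Import all_boot all_order all_algebra.
From mathcomp Require Import ring.
Import Order.TTheory GRing.Theory Num.Theory.
Local Open Scope ring_scope.

Section Expectation.
Variables (R : realFieldType) (N : nat) (Re : {set 'I_N}) (pz : R).

Local Notation E := (EZ Re pz).

Definition pZ (i : 'I_N) (b : bool) : R :=
  if b then pZ1 Re pz i else 1 - pZ1 Re pz i.

Lemma pZ_add_negb i b : pZ i b + pZ i (~~ b) = 1.
Proof. by rewrite /pZ; case: b => /=; ring. Qed.

Lemma sum_probZ : \sum_(z : assignment N) probZ Re pz z = 1.
Proof.
rewrite /probZ -(bigA_distr_bigA pZ) /=.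
by apply: big1 => i _; rewrite big_bool; exact: (pZ_add_negb i true).
Qed.

Lemma eq_EZ f g : f =1 g -> E f = E g.
Proof. by move=> fg; apply: eq_bigr => z _; rewrite fg. Qed.

Lemma EZ_sum (I : finType) (P : pred I) (F : I -> assignment N -> R) :
  E (fun z => \sum_(i | P i) F i z) = \sum_(i | P i) E (F i).
Proof. by rewrite /EZ exchange_big; apply: eq_bigr => z _; rewrite mulr_sumr. Qed.

Lemma EZD f g : E (fun z => f z + g z) = E f + E g.
Proof. by rewrite /EZ -big_split; apply: eq_bigr => z _; rewrite mulrDr. Qed.

Lemma EZB f g : E (fun z => f z - g z) = E f - E g.
Proof. by rewrite /EZ -sumrB; apply: eq_bigr => z _; rewrite mulrBr. Qed.

Lemma EZMl c f : E (fun z => c * f z) = c * E f.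
Proof. by rewrite /EZ mulr_sumr; apply: eq_bigr => z _; rewrite mulrCA. Qed.

Lemma EZ_cst c : E (fun _ => c) = c.
Proof. by rewrite /EZ -mulr_suml sum_probZ mul1r. Qed.

Lemma EZ_bool_comp (f : bool -> R) (F : assignment N -> bool) :
  E (fun z => f (F z)) = f false + (f true - f false) * E (fun z => (F z)%:R).
Proof.
transitivity (E (fun z => f false + (f true - f false) * (F z)%:R)).
  by apply: eq_EZ => z; case: (F z) => /=; ring.
by rewrite EZD EZ_cst EZMl.
Qed.

Definition toggle (i : 'I_N) (z : assignment N) : assignment N :=
  [ffun j => if j == i then ~~ z i else z j].

Lemma toggle_id i z : toggle i z i = ~~ z i.
Proof. by rewrite ffunE eqxx. Qed.

Lemma toggle_neq i z j : j != i -> toggle i z j = z j.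
Proof. by rewrite ffunE => /negbTE ->. Qed.

Lemma toggleK i : involutive (toggle i).
Proof.
move=> z; apply/ffunP => j; rewrite ffunE.
by case: eqP => [->|/eqP ji]; rewrite ?toggle_id ?negbK ?toggle_neq.
Qed.

Definition probZ_off (i : 'I_N) (z : assignment N) : R :=
  \prod_(j | j != i) pZ j (z j).

Lemma probZ_split i z : probZ Re pz z = pZ i (z i) * probZ_off i z.
Proof. exact: bigD1. Qed.

Lemma probZ_off_toggle i z : probZ_off i (toggle i z) = probZ_off i z.
Proof. by apply: eq_bigr => j ji; rewrite toggle_neq. Qed.

Section ToggleInvariant.
Variables (i : 'I_N) (g : assignment N -> R).
Hypothesis g_toggle : forall z, g (toggle i z) = g z.

(* Pairing z with toggle i z sums out the i-th coordinate. *)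
Lemma EZ_toggle_invariant b :
  E g = \sum_(z : assignment N | z i == b) probZ_off i z * g z.
Proof.
rewrite /EZ (bigID (fun z : assignment N => z i == b)) /=.
rewrite [X in _ + X](reindex_inj (inv_inj (toggleK i))) /=.
rewrite [X in _ + X](eq_bigl (fun z : assignment N => z i == b)); last first.
  by move=> z; rewrite toggle_id; case: (z i); case: b.
rewrite -big_split; apply: eq_bigr => z /eqP zi.
rewrite !(probZ_split i) probZ_off_toggle g_toggle toggle_id zi.
by rewrite /= -!mulrDl pZ_add_negb mul1r.
Qed.

Lemma EZ_indicator_indep b :
  E (fun z => (z i == b)%:R * g z) = pZ i b * E g.
Proof.
rewrite (EZ_toggle_invariant b) /EZ mulr_sumr (bigID (fun z : assignment N => z i == b)) /=.
rewrite [X in _ + X]big1 ?addr0 => [|z /negbTE ->]; last by rewrite !mul0r mulr0.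
by apply: eq_bigr => z zi; rewrite zi (probZ_split i) (eqP zi) mul1r mulrA.
Qed.

End ToggleInvariant.

Variables (A : 'I_N -> 'I_N -> bool) (Y : 'I_N -> bool -> bool -> R).

Lemma exposure_toggle i z : exposure A (toggle i z) i = exposure A z i.
Proof.
by rewrite /exposure; congr (0 < _)%N; apply: eq_bigr => j ji; rewrite toggle_neq.
Qed.

Lemma obsY_eval z i : obsY A Y z i = Y i (z i) (exposure A z i).
Proof.
rewrite /obsY !big_bool /=.
by case: (z i); case: (exposure A z i); rewrite /= ?mulr1 ?mulr0 ?addr0 ?add0r.
Qed.

Lemma EZ_arm_outcome i b :
  E (fun z => (z i == b)%:R * obsY A Y z i)
  = pZ i b * E (fun z => Y i b (exposure A z i)).
Proof.
rewrite -EZ_indicator_indep => [|z]; last by rewrite exposure_toggle.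
by apply: eq_EZ => z; rewrite obsY_eval; case: eqP => [->|]; rewrite ?mul0r.
Qed.

Lemma EZ_ipw_contrast i : i \in Re -> pz != 0 -> pz != 1 ->
  E (fun z => (z i)%:R * obsY A Y z i / pz - (~~ z i)%:R * obsY A Y z i / (1 - pz))
  = E (fun z => Y i true (exposure A z i)) - E (fun z => Y i false (exposure A z i)).
Proof.
move=> iRe pz0 pz1; have pz1' : 1 - pz != 0 by rewrite subr_eq0 eq_sym.
have pZE b : pZ i b = if b then pz else 1 - pz by rewrite /pZ /pZ1 iRe.
rewrite EZB; congr (_ - _).
- rewrite (@eq_EZ _ (fun z => pz^-1 * ((z i == true)%:R * obsY A Y z i))).
    by rewrite EZMl EZ_arm_outcome pZE mulKf.
  by move=> z; rewrite eqb_id mulrC.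
- rewrite (@eq_EZ _ (fun z => (1 - pz)^-1 * ((z i == false)%:R * obsY A Y z i))).
    by rewrite EZMl EZ_arm_outcome pZE mulKf.
  by move=> z; rewrite eqbF_neg mulrC.
Qed.

Lemma EZ_outcome_contrast i kappa :
  Y i true true - Y i false true = kappa * (Y i true false - Y i false false) ->
  E (fun z => Y i true (exposure A z i)) - E (fun z => Y i false (exposure A z i))
  = (1 + pi_e Re pz A i * (kappa - 1)) * (Y i true false - Y i false false).
Proof.
move=> Hkappa; rewrite !(EZ_bool_comp (Y i _)) -/(pi_e Re pz A i).
have -> : Y i true true = Y i false true + kappa * (Y i true false - Y i false false).
  by rewrite -Hkappa addrC subrK.
ring.
Qed.

Lemma EZ_adjusted_contrast i kappa : i \in Re -> pz != 0 -> pz != 1 ->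
  Y i true true - Y i false true = kappa * (Y i true false - Y i false false) ->
  1 + pi_e Re pz A i * (kappa - 1) != 0 ->
  E (fun z => (1 + pi_e Re pz A i * (kappa - 1))^-1 *
     ((z i)%:R * obsY A Y z i / pz - (~~ z i)%:R * obsY A Y z i / (1 - pz)))
  = Y i true false - Y i false false.
Proof.
move=> iRe pz0 pz1 Hkappa Hden.
by rewrite EZMl EZ_ipw_contrast // (EZ_outcome_contrast _ _ Hkappa) mulKf.
Qed.

End Expectation.

Theorem proposition3 (R : realFieldType) (N : nat)
  (A : 'I_N -> 'I_N -> bool)
  (A_sym : forall i j, A i j = A j i)
  (A_irr : forall i, A i i = false)
  (Re Ra : {set 'I_N})
  (Re_ne : Re != set0)
  (Ra_disj : [disjoint Ra & Re])
  (e : 'I_N -> 'I_N)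
  (e_ego : forall j, j \in Ra -> e j \in Re)
  (e_adj : forall j, j \in Ra -> A j (e j))
  (pz : R) (pz_gt0 : 0 < pz) (pz_lt1 : pz < 1)
  (Y : 'I_N -> bool -> bool -> R)
  (kappa : R)
  (Hkappa : forall i, i \in Re ->
     Y i true true - Y i false true = kappa * (Y i true false - Y i false false))
  (Hden : forall i, i \in Re -> 1 + pi_e Re pz A i * (kappa - 1) != 0) :
  EZ Re pz (DE_adj Re pz kappa A Y) = DE Re Y.
Proof.
rewrite /DE_adj /DE EZMl EZ_sum; congr (_ * _); apply: eq_bigr => i iRe.
apply: EZ_adjusted_contrast => //.
- by rewrite gt_eqF.
- by rewrite lt_eqF.
- exact: Hkappa.
- exact: Hden.
Qed.
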